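(* Let $\beta_{\mathtt{H}},\beta_{\mathtt{L}},\gamma_{\mathtt{H}},\gamma_{\mathtt{L}}>0$ with $\beta_{\mathtt{H}}/\gamma_{\mathtt{H}}>\beta_{\mathtt{L}}/\gamma_{\mathtt{L}}$ and $\beta_{\mathtt{H}}>\beta_{\mathtt{L}}$, let $q_{\mathtt{HL}},q_{\mathtt{LH}}\ge 0$, $\alpha\in(0,1)$, fix $z_{\mathtt{S}}\in[0,1]$, and set $\hat\beta_{\mathtt{Q}}:=\beta_{\mathtt{Q}}(\alpha z_{\mathtt{S}}+1-z_{\mathtt{S}})$ for $\mathtt{Q}\in\{\mathtt{H},\mathtt{L}\}$. Consider the dynamics \begin{align*} \dot{\mathtt{I}}_{\mathtt{H}}&=\hat\beta_{\mathtt{H}}\mathtt{I}_{\mathtt{H}}(1-\mathtt{I}_{\mathtt{H}}-\mathtt{I}_{\mathtt{L}})+q_{\mathtt{LH}}\mathtt{I}_{\mathtt{L}}-(q_{\mathtt{HL}}+\gamma_{\mathtt{H}})\mathtt{I}_{\mathtt{H}},\\ \dot{\mathtt{I}}_{\mathtt{L}}&=\hat\beta_{\mathtt{L}}\mathtt{I}_{\mathtt{L}}(1-\mathtt{I}_{\mathtt{H}}-\mathtt{I}_{\mathtt{L}})+q_{\mathtt{HL}}\mathtt{I}_{\mathtt{H}}-(q_{\mathtt{LH}}+\gamma_{\mathtt{L}})\mathtt{I}_{\mathtt{L}}. \end{align*} If $(\mathtt{I}^\star_{\mathtt{H}},\mathtt{I}^\star_{\mathtt{L}})\in(0,1)^2$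 is an equilibrium of this system (an endemic equilibrium), then it is locally stable.
   Context: Bi-virus SIS model with strains $\mathtt{H},\mathtt{L}$: $\mathtt{I}_{\mathtt{H}},\mathtt{I}_{\mathtt{L}}$ are infected fractions, $1-\mathtt{I}_{\mathtt{H}}-\mathtt{I}_{\mathtt{L}}$ the susceptible fraction, $\beta$'s transmission rates, $\gamma$'s recovery rates, $q_{\mathtt{HL}},q_{\mathtt{LH}}$ mutation rates, $z_{\mathtt{S}}$ fraction of susceptibles protected, protection scaling infection rates by $\alpha$. *)

From Stdlib Require Import Reals Lra.
Open Scope R_scope.

Definition bhat (beta alpha zS : R) : R := beta * (alpha * zS + 1 - zS).

Definition fH (bH bL gH gL qHL qLH alpha zS : R) (IH IL : R) : R :=
  bhat bH alpha zS * IH * (1 - IH - IL) + qLH * IL - (qHL + gH) * IH.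

Definition fL (bH bL gH gL qHL qLH alpha zS : R) (IH IL : R) : R :=
  bhat bL alpha zS * IL * (1 - IH - IL) + qHL * IH - (qLH + gL) * IL.

Definition is_solution (F G : R -> R -> R) (x y : R -> R) : Prop :=
  (forall eps, 0 < eps -> exists delta, 0 < delta /\
     forall t, 0 <= t < delta -> Rabs (x t - x 0) < eps /\ Rabs (y t - y 0) < eps) /\
  (forall t, 0 < t ->
     derivable_pt_lim x t (F (x t) (y t)) /\ derivable_pt_lim y t (G (x t) (y t))).

Definition dist2 (a b c d : R) : R := Rmax (Rabs (a - c)) (Rabs (b - d)).

Definition is_equilibrium (F G : R -> R -> R) (eH eL : R) : Prop :=
  F eH eL = 0 /\ G eH eL = 0.

(* Local (asymptotic) stability of an equilibrium: Lyapunov stable and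
   locally attractive. *)
Definition locally_stable (F G : R -> R -> R) (eH eL : R) : Prop :=
  (forall eps, 0 < eps -> exists delta, 0 < delta /\
     forall x y, is_solution F G x y -> dist2 (x 0) (y 0) eH eL < delta ->
       forall t, 0 <= t -> dist2 (x t) (y t) eH eL < eps) /\
  (exists delta, 0 < delta /\
     forall x y, is_solution F G x y -> dist2 (x 0) (y 0) eH eL < delta ->
       forall eps, 0 < eps -> exists T, forall t, T <= t ->
         dist2 (x t) (y t) eH eL < eps).

(* Write b_Q for the effective rates hat beta_Q. At an endemic equilibrium the
   equilibrium equations turn the Jacobian J into J_HH I*_H = - q_LH I*_L - b_H I*_H^2,
   J_LL I*_L = - q_HL I*_H - b_L I*_L^2 and
   det J I*_H I*_L = (I*_H + I*_L) (q_LH b_L I*_L^2 + q_HL b_H I*_H^2).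
   The determinant is positive because without mutation both strains could only coexist
   with equal ratios beta/gamma. So J is Hurwitz, and the explicit quadratic Lyapunov
   function of a planar Hurwitz matrix still decays exponentially along the nonlinear flow
   near the equilibrium, the remainder being quadratic. *)

From Stdlib Require Import Reals Lra Psatz.
Open Scope R_scope.

Definition quad_form (p r s u v : R) : R :=
  p * (u * u) + 2 * r * (u * v) + s * (v * v).

Definition quad_form_deriv (p r s u v du dv : R) : R :=
  2 * (p * u + r * v) * du + 2 * (r * u + s * v) * dv.

Lemma quad_form_nonneg p r s u v :
  0 <= p -> 0 <= s -> r * r <= p * s -> 0 <= quad_form p r s u v.
Proof.
  unfold quad_form; intros Hp Hs Hrs.
  destruct (Rle_lt_or_eq_dec 0 p Hp) as [Hp0|<-].
  - assert (E : p * (p * (u * u) + 2 * r * (u * v) + s * (v * v))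
                = (p * u + r * v) ^ 2 + (p * s - r * r) * (v * v)) by ring.
    assert (0 <= (p * s - r * r) * (v * v)) by (apply Rmult_le_pos; nra).
    pose proof (pow2_ge_0 (p * u + r * v)).
    nra.
  - assert (r = 0) by nra; subst r; nra.
Qed.

Lemma quad_form_le p r s u v :
  0 <= p -> 0 <= s -> r * r <= p * s ->
  quad_form p r s u v <= (p + s) * (u * u + v * v).
Proof.
  intros Hp Hs Hrs.
  pose proof (quad_form_nonneg s (- r) p u v Hs Hp ltac:(nra)).
  unfold quad_form in *; lra.
Qed.

Lemma quad_form_ge p r s u v :
  0 < p -> 0 < s -> r * r < p * s ->
  (p * s - r * r) / (p + s) * (u * u + v * v) <= quad_form p r s u v.
Proof.
  intros Hp Hs Hrs.
  set (mu := (p * s - r * r) / (p + s)).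
  assert (Hmu : mu * (p + s) = p * s - r * r) by (unfold mu; field; lra).
  assert (Hmu0 : 0 < mu) by (unfold mu; apply Rdiv_lt_0_compat; lra).
  (* (p - mu) (s - mu) - r^2 = mu^2, so the shifted form is positive semidefinite *)
  pose proof (quad_form_nonneg (p - mu) r (s - mu) u v ltac:(nra) ltac:(nra) ltac:(nra)).
  unfold quad_form in *; lra.
Qed.

Lemma derivable_pt_lim_sub_const (x : R -> R) t x' e :
  derivable_pt_lim x t x' -> derivable_pt_lim (fun t => x t - e) t x'.
Proof.
  intros Hx; replace x' with (x' - 0) by ring.
  exact (derivable_pt_lim_minus _ _ _ _ _ Hx (derivable_pt_lim_const e t)).
Qed.

Lemma derivable_pt_lim_quad_form (x y : R -> R) p r s t x' y' :
  derivable_pt_lim x t x' -> derivable_pt_lim y t y' ->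
  derivable_pt_lim (fun t => quad_form p r s (x t) (y t)) t
    (quad_form_deriv p r s (x t) (y t) x' y').
Proof.
  intros Hx Hy.
  replace (quad_form_deriv p r s (x t) (y t) x' y') with
    (p * (x' * x t + x t * x') + 2 * r * (x' * y t + x t * y')
     + s * (y' * y t + y t * y')) by (unfold quad_form_deriv; ring).
  exact (derivable_pt_lim_plus _ _ t _ _
    (derivable_pt_lim_plus _ _ t _ _
       (derivable_pt_lim_scal _ p t _ (derivable_pt_lim_mult _ _ t _ _ Hx Hx))
       (derivable_pt_lim_scal _ (2 * r) t _ (derivable_pt_lim_mult _ _ t _ _ Hx Hy)))
    (derivable_pt_lim_scal _ s t _ (derivable_pt_lim_mult _ _ t _ _ Hy Hy))).
Qed.

Lemma derivable_pt_lim_exp_mul (f : R -> R) k t l :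
  derivable_pt_lim f t l ->
  derivable_pt_lim (fun t => exp (k * t) * f t) t
    (k * exp (k * t) * f t + exp (k * t) * l).
Proof.
  intros Hf.
  assert (Hk := derivable_pt_lim_scal id k t 1 (derivable_pt_lim_id t)).
  assert (He := derivable_pt_lim_comp _ exp t _ _ Hk (derivable_pt_lim_exp _)).
  replace (k * exp (k * t) * f t + exp (k * t) * l)
    with (exp (k * t) * (k * 1) * f t + exp (k * t) * l) by ring.
  exact (derivable_pt_lim_mult _ _ t _ _ He Hf).
Qed.

Lemma le_of_derivable_pt_lim_nonpos (f f' : R -> R) a b :
  a <= b -> (forall t, a <= t <= b -> derivable_pt_lim f t (f' t)) ->
  (forall t, a < t < b -> f' t <= 0) -> f b <= f a.
Proof.
  intros Hab Hd Hn; destruct (Req_dec a b) as [<-|Hne]; [lra|].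
  destruct (MVT_cor2 f f' a b) as [z [Hz1 Hz2]]; [lra|exact Hd|].
  assert (f' z <= 0) by (apply Hn; lra); nra.
Qed.

Lemma derivable_pt_lim_lt_near f t l c :
  derivable_pt_lim f t l -> f t < c ->
  exists al, 0 < al /\ forall z, Rabs (z - t) < al -> f z < c.
Proof.
  intros Hf Hc.
  destruct (derivable_continuous_pt f t (exist _ l Hf) (c - f t) ltac:(lra))
    as [al [Hal Hnear]].
  exists al; split; [exact Hal|]; intros z Hz.
  destruct (Req_dec z t) as [->|Hne]; [exact Hc|].
  assert (Hd : Rabs (f z - f t) < c - f t) by (apply (Hnear z); repeat split; auto).
  apply Rabs_def2 in Hd; lra.
Qed.

Lemma sublevel_forward_invariant (V V' : R -> R) c eta :
  (forall t, 0 < t -> derivable_pt_lim V t (V' t)) ->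
  (forall t, 0 < t -> V t < c -> V' t <= 0) ->
  0 < eta -> (forall t, 0 <= t < eta -> V t < c) ->
  forall t, 0 <= t -> V t < c.
Proof.
  intros HV HV' Heta Hstart t1 Ht1.
  destruct (Rlt_le_dec (V t1) c) as [ok|Hexit]; [exact ok|exfalso].
  assert (Ht1eta : eta <= t1).
  { destruct (Rlt_le_dec t1 eta) as [h|h]; [|exact h].
    pose proof (Hstart t1 ltac:(lra)); lra. }
  (* With s1 the supremum of E: if V s1 < c, continuity lets V stay below c a bit
     beyond s1; if V s1 >= c, V is nonincreasing on [eta/4, s1] where V < c. *)
  set (E := fun s => s <= t1 /\ forall r, 0 <= r <= s -> V r < c).
  assert (HE : E (eta / 2)) by (split; [lra|intros r Hr; apply Hstart; lra]).
  destruct (completeness E) as [s1 [Hub Hlub]].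
  { exists t1; intros z [Hz _]; exact Hz. }
  { exists (eta / 2); exact HE. }
  assert (Hs1 : eta / 2 <= s1 <= t1).
  { split; [exact (Hub _ HE)|apply Hlub; intros z [Hz _]; exact Hz]. }
  assert (Hbefore : forall r, 0 <= r < s1 -> V r < c).
  { intros r Hr; destruct (Rlt_le_dec (V r) c) as [ok|Hr']; [exact ok|exfalso].
    assert (s1 <= r); [|lra].
    apply Hlub; intros z [_ Hz]; destruct (Rle_lt_dec z r) as [h|h]; [exact h|].
    pose proof (Hz r ltac:(lra)); lra. }
  destruct (Rlt_le_dec (V s1) c) as [Hin|Hout].
  - destruct (derivable_pt_lim_lt_near V s1 (V' s1) c (HV s1 ltac:(lra)) Hin)
      as [al [Hal Hnear]].
    assert (Hs1t1 : s1 < t1) by (destruct (Req_dec s1 t1) as [<-|]; lra).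
    set (s2 := s1 + Rmin (al / 2) (t1 - s1)).
    assert (Hstep : 0 < Rmin (al / 2) (t1 - s1)) by (apply Rmin_pos; lra).
    pose proof (Rmin_l (al / 2) (t1 - s1)); pose proof (Rmin_r (al / 2) (t1 - s1)).
    assert (E s2).
    { split; [unfold s2; lra|]; intros r Hr.
      destruct (Rlt_le_dec r s1) as [h|h]; [apply Hbefore; lra|].
      apply Hnear; rewrite Rabs_pos_eq; unfold s2 in Hr; lra. }
    pose proof (Hub s2 ltac:(assumption)); unfold s2 in *; lra.
  - assert (V s1 <= V (eta / 4)); [|pose proof (Hstart (eta / 4) ltac:(lra)); lra].
    apply (le_of_derivable_pt_lim_nonpos V V'); [lra| |].
    + intros t Ht; apply HV; lra.
    + intros t Ht; apply HV'; [lra|apply Hbefore; lra].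
Qed.

Lemma exp_decay_of_derivable_pt_lim (V V' : R -> R) k t0 :
  (forall t, t0 <= t -> derivable_pt_lim V t (V' t)) ->
  (forall t, t0 < t -> V' t <= - k * V t) ->
  forall t, t0 <= t -> V t <= exp (- (k * (t - t0))) * V t0.
Proof.
  intros HV HV' t Ht.
  assert (Hmono : exp (k * t) * V t <= exp (k * t0) * V t0).
  { apply (le_of_derivable_pt_lim_nonpos (fun t => exp (k * t) * V t)
             (fun t => k * exp (k * t) * V t + exp (k * t) * V' t)); [exact Ht| |].
    - intros z Hz; apply derivable_pt_lim_exp_mul, HV; lra.
    - intros z Hz; pose proof (HV' z ltac:(lra)); pose proof (exp_pos (k * z)); nra. }
  assert (Hsplit : exp (k * t0) = exp (- (k * (t - t0))) * exp (k * t))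
    by (rewrite <- exp_plus; f_equal; ring).
  pose proof (exp_pos (k * t)).
  rewrite Hsplit, Rmult_assoc in Hmono.
  apply (Rmult_le_reg_l (exp (k * t))); [assumption|].
  lra.
Qed.

Lemma mul_exp_neg_lt A k b t :
  0 < A -> 0 < k -> 0 < b -> A / (k * b) <= t -> A * exp (- (k * t)) < b.
Proof.
  intros HA Hk Hb Ht.
  assert (Hkt : A / b <= k * t).
  { replace (A / b) with (k * (A / (k * b))) by (field; lra).
    apply Rmult_le_compat_l; lra. }
  assert (0 < A / b) by (apply Rdiv_lt_0_compat; lra).
  pose proof (exp_ineq1 (k * t) ltac:(lra)).
  assert (HA' : A < b * exp (k * t)).
  { replace A with (b * (A / b)) by (field; lra); apply Rmult_lt_compat_l; lra. }
  rewrite exp_Ropp.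
  pose proof (exp_pos (k * t)).
  apply (Rmult_lt_reg_r (exp (k * t))); [assumption|].
  rewrite Rmult_assoc, Rinv_l; lra.
Qed.

Lemma Rmax_abs_sqr_le u v :
  Rmax (Rabs u) (Rabs v) * Rmax (Rabs u) (Rabs v) <= u * u + v * v.
Proof.
  pose proof (Rsqr_abs u); pose proof (Rsqr_abs v); unfold Rsqr in *.
  unfold Rmax; destruct (Rle_dec (Rabs u) (Rabs v)); nra.
Qed.

Lemma sumsq_le_Rmax_abs_sqr u v :
  u * u + v * v <= 2 * (Rmax (Rabs u) (Rabs v) * Rmax (Rabs u) (Rabs v)).
Proof.
  pose proof (Rsqr_abs u); pose proof (Rsqr_abs v); unfold Rsqr in *.
  pose proof (Rabs_pos u); pose proof (Rabs_pos v).
  unfold Rmax; destruct (Rle_dec (Rabs u) (Rabs v)); nra.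
Qed.

Lemma solution_dist2_lt_near F G x y e1 e2 rho :
  is_solution F G x y -> dist2 (x 0) (y 0) e1 e2 < rho ->
  exists eta, 0 < eta /\ forall t, 0 <= t < eta -> dist2 (x t) (y t) e1 e2 < rho.
Proof.
  intros [Hcont _] H0.
  destruct (Hcont (rho - dist2 (x 0) (y 0) e1 e2) ltac:(lra)) as [eta [Heta Hnear]].
  exists eta; split; [exact Heta|]; intros t Ht.
  destruct (Hnear t Ht) as [Hx Hy].
  unfold dist2 in *.
  pose proof (Rmax_l (Rabs (x 0 - e1)) (Rabs (y 0 - e2))).
  pose proof (Rmax_r (Rabs (x 0 - e1)) (Rabs (y 0 - e2))).
  pose proof (Rabs_triang (x t - x 0) (x 0 - e1)).
  pose proof (Rabs_triang (y t - y 0) (y 0 - e2)).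
  replace (x t - x 0 + (x 0 - e1)) with (x t - e1) in * by ring.
  replace (y t - y 0 + (y 0 - e2)) with (y t - e2) in * by ring.
  apply Rmax_lub_lt; lra.
Qed.

Section QuadraticLyapunov.

Variables (F G : R -> R -> R) (e1 e2 p r s k r0 : R).
Hypotheses (Hp : 0 < p) (Hs : 0 < s) (Hrs : r * r < p * s) (Hk : 0 < k) (Hr0 : 0 < r0).
Hypothesis Hdecr : forall X Y,
  quad_form p r s (X - e1) (Y - e2) < r0 ->
  quad_form_deriv p r s (X - e1) (Y - e2) (F X Y) (G X Y)
    <= - k * quad_form p r s (X - e1) (Y - e2).

Let W X Y := quad_form p r s (X - e1) (Y - e2).
Let mu := (p * s - r * r) / (p + s).

Lemma lyap_ge_dist2 X Y : mu * (dist2 X Y e1 e2 * dist2 X Y e1 e2) <= W X Y.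
Proof.
  pose proof (quad_form_ge p r s (X - e1) (Y - e2) Hp Hs Hrs).
  pose proof (Rmax_abs_sqr_le (X - e1) (Y - e2)).
  assert (0 < mu) by (apply Rdiv_lt_0_compat; lra).
  unfold W, dist2; eapply Rle_trans; [apply Rmult_le_compat_l|]; eauto; lra.
Qed.

Lemma dist2_lt_of_lyap_lt X Y eps :
  0 < eps -> W X Y < mu * (eps * eps) -> dist2 X Y e1 e2 < eps.
Proof.
  intros Heps HW; pose proof (lyap_ge_dist2 X Y).
  assert (Hmu : 0 < mu) by (apply Rdiv_lt_0_compat; lra).
  destruct (Rlt_le_dec (dist2 X Y e1 e2) eps) as [ok|Hfar]; [exact ok|exfalso].
  assert (eps * eps <= dist2 X Y e1 e2 * dist2 X Y e1 e2) by nra.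
  assert (mu * (eps * eps) <= mu * (dist2 X Y e1 e2 * dist2 X Y e1 e2))
    by (apply Rmult_le_compat_l; lra).
  lra.
Qed.

Lemma lyap_le_dist2 X Y : W X Y <= 2 * (p + s) * (dist2 X Y e1 e2 * dist2 X Y e1 e2).
Proof.
  pose proof (quad_form_le p r s (X - e1) (Y - e2) ltac:(lra) ltac:(lra) ltac:(lra)).
  pose proof (sumsq_le_Rmax_abs_sqr (X - e1) (Y - e2)).
  unfold W, dist2; eapply Rle_trans; [eassumption|].
  rewrite (Rmult_comm 2), Rmult_assoc; apply Rmult_le_compat_l; lra.
Qed.

Lemma lyap_nonneg X Y : 0 <= W X Y.
Proof. apply quad_form_nonneg; lra. Qed.

Lemma solution_lyap_derivable x y t :
  is_solution F G x y -> 0 < t ->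
  derivable_pt_lim (fun t => W (x t) (y t)) t
    (quad_form_deriv p r s (x t - e1) (y t - e2) (F (x t) (y t)) (G (x t) (y t))).
Proof.
  intros [_ Hder] Ht; destruct (Hder t Ht) as [Hx Hy].
  exact (derivable_pt_lim_quad_form (fun t => x t - e1) (fun t => y t - e2) p r s t _ _
           (derivable_pt_lim_sub_const x t _ e1 Hx)
           (derivable_pt_lim_sub_const y t _ e2 Hy)).
Qed.

Lemma solution_stays_in_sublevel x y c rho :
  is_solution F G x y -> c <= r0 -> 2 * (p + s) * (rho * rho) <= c ->
  dist2 (x 0) (y 0) e1 e2 < rho ->
  forall t, 0 <= t -> W (x t) (y t) < c.
Proof.
  intros Hsol Hc Hrho H0.
  destruct (solution_dist2_lt_near F G x y e1 e2 rho Hsol H0) as [eta [Heta Hnear]].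
  apply (sublevel_forward_invariant _ _ c eta
           (fun t => solution_lyap_derivable x y t Hsol)); [|exact Heta|].
  - intros t Ht HW.
    pose proof (Hdecr (x t) (y t) ltac:(unfold W in HW; lra)).
    pose proof (lyap_nonneg (x t) (y t)); unfold W in *; nra.
  - intros t Ht.
    pose proof (Hnear t Ht); pose proof (lyap_le_dist2 (x t) (y t)).
    assert (0 <= dist2 (x t) (y t) e1 e2)
      by (unfold dist2; eapply Rle_trans; [apply Rabs_pos|apply Rmax_l]).
    assert (dist2 (x t) (y t) e1 e2 * dist2 (x t) (y t) e1 e2 < rho * rho) by nra.
    cbv beta; nra.
Qed.

Lemma solution_lyap_decay x y :
  is_solution F G x y -> (forall t, 0 <= t -> W (x t) (y t) < r0) ->
  forall t, 1 <= t -> W (x t) (y t) <= exp (- (k * (t - 1))) * W (x 1) (y 1).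
Proof.
  intros Hsol Hin.
  apply (exp_decay_of_derivable_pt_lim (fun t => W (x t) (y t))
    (fun t => quad_form_deriv p r s (x t - e1) (y t - e2) (F (x t) (y t)) (G (x t) (y t)))).
  - intros t Ht; apply (solution_lyap_derivable x y t Hsol); lra.
  - intros t Ht; apply Hdecr, (Hin t); lra.
Qed.

Lemma locally_stable_of_quadratic_lyapunov : locally_stable F G e1 e2.
Proof.
  assert (Hmu : 0 < mu) by (apply Rdiv_lt_0_compat; lra).
  assert (Hradius : forall c, 0 < c ->
            exists rho, 0 < rho /\ 2 * (p + s) * (rho * rho) <= c).
  { intros c Hc; exists (sqrt (c / (2 * (p + s)))); split.
    - apply sqrt_lt_R0, Rdiv_lt_0_compat; lra.
    - rewrite sqrt_sqrt by (apply Rlt_le, Rdiv_lt_0_compat; lra).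
      right; field; lra. }
  split.
  - intros eps Heps.
    assert (0 < mu * (eps * eps)) by (apply Rmult_lt_0_compat; nra).
    destruct (Hradius (Rmin r0 (mu * (eps * eps))) ltac:(apply Rmin_pos; lra))
      as [rho [Hrho Hrho_c]].
    exists rho; split; [exact Hrho|]; intros x y Hsol H0 t Ht.
    apply dist2_lt_of_lyap_lt; [exact Heps|].
    eapply Rlt_le_trans; [|apply Rmin_r].
    exact (solution_stays_in_sublevel x y _ rho Hsol (Rmin_l _ _) Hrho_c H0 t Ht).
  - destruct (Hradius r0 Hr0) as [rho [Hrho Hrho_c]].
    exists rho; split; [exact Hrho|]; intros x y Hsol H0 eps Heps.
    pose proof (solution_stays_in_sublevel x y r0 rho Hsol (Rle_refl _) Hrho_c H0) as Hin.
    assert (0 < mu * (eps * eps)) by (apply Rmult_lt_0_compat; nra).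
    assert (0 <= r0 / (k * (mu * (eps * eps))))
      by (apply Rlt_le, Rdiv_lt_0_compat; [lra|apply Rmult_lt_0_compat; lra]).
    exists (1 + r0 / (k * (mu * (eps * eps)))); intros t Ht.
    apply dist2_lt_of_lyap_lt; [exact Heps|].
    pose proof (solution_lyap_decay x y Hsol Hin t ltac:(lra)) as Hdecay.
    pose proof (Hin 1 ltac:(lra)); pose proof (exp_pos (- (k * (t - 1)))).
    pose proof (mul_exp_neg_lt r0 k (mu * (eps * eps)) (t - 1) Hr0 Hk ltac:(lra) ltac:(lra)).
    nra.
Qed.

End QuadraticLyapunov.

(* The matrix [[lyap_p, lyap_r], [lyap_r, lyap_s]] is det(J) I + adj(J)^T adj(J)
   for J = [[a, b], [c, d]]; since adj(J) J = det(J) I and J + adj(J) = tr(J) I,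
   it solves J^T P + P J = 2 tr(J) det(J) I. *)
Definition lyap_p (a b c d : R) : R := (a * d - b * c) + c * c + d * d.
Definition lyap_r (a b c d : R) : R := - (a * c + b * d).
Definition lyap_s (a b c d : R) : R := (a * d - b * c) + a * a + b * b.

Lemma quad_form_deriv_lyap a b c d u v h1 h2 :
  quad_form_deriv (lyap_p a b c d) (lyap_r a b c d) (lyap_s a b c d) u v
    (a * u + b * v + h1) (c * u + d * v + h2)
  = 2 * (a + d) * (a * d - b * c) * (u * u + v * v)
    + 2 * (lyap_p a b c d * u + lyap_r a b c d * v) * h1
    + 2 * (lyap_r a b c d * u + lyap_s a b c d * v) * h2.
Proof. unfold quad_form_deriv, lyap_p, lyap_r, lyap_s; ring. Qed.

Lemma lyap_pos_def a b c d : 0 < a * d - b * c ->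
  0 < lyap_p a b c d /\ 0 < lyap_s a b c d /\
  lyap_r a b c d * lyap_r a b c d < lyap_p a b c d * lyap_s a b c d.
Proof.
  intros HD.
  assert (Hdet : lyap_p a b c d * lyap_s a b c d - lyap_r a b c d * lyap_r a b c d
                 = (a * d - b * c) * (2 * (a * d - b * c) + a * a + b * b + c * c + d * d))
    by (unfold lyap_p, lyap_r, lyap_s; ring).
  unfold lyap_p, lyap_s in *; repeat split; nra.
Qed.

Lemma Rabs_lin_le p r u v del :
  Rabs u <= del -> Rabs v <= del -> Rabs (p * u + r * v) <= (Rabs p + Rabs r) * del.
Proof.
  intros Hu Hv; eapply Rle_trans; [apply Rabs_triang|]; rewrite !Rabs_mult.
  pose proof (Rabs_pos p); pose proof (Rabs_pos r); nra.
Qed.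

Lemma Rmult_le_of_Rabs_le w h A B : Rabs w <= A -> Rabs h <= B -> w * h <= A * B.
Proof.
  intros Hw Hh; apply Rle_trans with (Rabs w * Rabs h).
  - rewrite <- Rabs_mult; apply Rle_abs.
  - apply Rmult_le_compat; auto using Rabs_pos.
Qed.

Lemma Rabs_le_of_sqr_le w del : 0 <= del -> w * w <= del * del -> Rabs w <= del.
Proof.
  intros Hdel Hw; rewrite <- (Rabs_pos_eq del Hdel).
  apply Rsqr_le_abs_0; exact Hw.
Qed.

Section Linearization.

Variables (F G : R -> R -> R) (e1 e2 a b c d K : R).
Hypotheses (Htr : a + d < 0) (Hdet : 0 < a * d - b * c).
Hypothesis HF : forall X Y,
  Rabs (F X Y - (a * (X - e1) + b * (Y - e2))) <= K * ((X - e1) ^ 2 + (Y - e2) ^ 2).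
Hypothesis HG : forall X Y,
  Rabs (G X Y - (c * (X - e1) + d * (Y - e2))) <= K * ((X - e1) ^ 2 + (Y - e2) ^ 2).

Let p := lyap_p a b c d.
Let r := lyap_r a b c d.
Let s := lyap_s a b c d.
Let Pm := Rabs p + Rabs r + Rabs s.

Lemma lyap_deriv_perturbed_le u v h1 h2 del :
  Rabs u <= del -> Rabs v <= del ->
  Rabs h1 <= K * (u * u + v * v) -> Rabs h2 <= K * (u * u + v * v) ->
  quad_form_deriv p r s u v (a * u + b * v + h1) (c * u + d * v + h2)
    <= (2 * (a + d) * (a * d - b * c) + 4 * Pm * K * del) * (u * u + v * v).
Proof.
  intros Hu Hv Hh1 Hh2.
  unfold p, r, s; rewrite quad_form_deriv_lyap; fold p r s.
  assert (Hw1 : Rabs (p * u + r * v) <= Pm * del).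
  { eapply Rle_trans; [exact (Rabs_lin_le p r u v del Hu Hv)|].
    apply Rmult_le_compat_r; [|unfold Pm; pose proof (Rabs_pos s); lra].
    eapply Rle_trans; [apply Rabs_pos|exact Hu]. }
  assert (Hw2 : Rabs (r * u + s * v) <= Pm * del).
  { eapply Rle_trans; [exact (Rabs_lin_le r s u v del Hu Hv)|].
    apply Rmult_le_compat_r; [|unfold Pm; pose proof (Rabs_pos p); lra].
    eapply Rle_trans; [apply Rabs_pos|exact Hu]. }
  pose proof (Rmult_le_of_Rabs_le _ _ _ _ Hw1 Hh1).
  pose proof (Rmult_le_of_Rabs_le _ _ _ _ Hw2 Hh2).
  lra.
Qed.

Lemma lyap_decrease_near_equilibrium : exists k r0, 0 < k /\ 0 < r0 /\
  forall X Y, quad_form p r s (X - e1) (Y - e2) < r0 ->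
    quad_form_deriv p r s (X - e1) (Y - e2) (F X Y) (G X Y)
      <= - k * quad_form p r s (X - e1) (Y - e2).
Proof.
  destruct (lyap_pos_def a b c d Hdet) as [Hp [Hs Hrs]]; fold p r s in Hp, Hs, Hrs.
  assert (HK : 0 <= K).
  { pose proof (Rle_trans _ _ _ (Rabs_pos _) (HF (e1 + 1) e2)) as HK.
    replace ((e1 + 1 - e1) ^ 2 + (e2 - e2) ^ 2) with 1 in HK by ring; lra. }
  assert (HPm : 0 <= Pm).
  { unfold Pm; pose proof (Rabs_pos p); pose proof (Rabs_pos r); pose proof (Rabs_pos s); lra. }
  set (m := - ((a + d) * (a * d - b * c))).
  set (del := m / (4 * Pm * K + 1)).
  set (mu := (p * s - r * r) / (p + s)).
  assert (Hm : 0 < m) by (unfold m; nra).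
  assert (Hdel : 0 < del) by (apply Rdiv_lt_0_compat; nra).
  assert (Hdel_m : 4 * Pm * K * del <= m).
  { assert (del * (4 * Pm * K + 1) = m) by (unfold del; field; nra); nra. }
  assert (Hmu : 0 < mu) by (apply Rdiv_lt_0_compat; lra).
  exists (m / (p + s)), (mu * (del * del)); repeat split;
    [apply Rdiv_lt_0_compat; lra|apply Rmult_lt_0_compat; nra|].
  intros X Y HQ.
  set (u := X - e1) in *; set (v := Y - e2) in *; set (N := u * u + v * v).
  assert (HN : N <= del * del).
  { pose proof (quad_form_ge p r s u v Hp Hs Hrs); fold mu N in H.
    apply Rlt_le, (Rmult_lt_reg_l mu); lra. }
  assert (HN0 : 0 <= N) by (unfold N; nra).
  assert (HN2 : (X - e1) ^ 2 + (Y - e2) ^ 2 = N) by (unfold N, u, v; ring).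
  assert (Hu : Rabs u <= del) by (apply Rabs_le_of_sqr_le; unfold N in HN; nra).
  assert (Hv : Rabs v <= del) by (apply Rabs_le_of_sqr_le; unfold N in HN; nra).
  assert (Hh1 : Rabs (F X Y - (a * u + b * v)) <= K * N) by (rewrite <- HN2; apply HF).
  assert (Hh2 : Rabs (G X Y - (c * u + d * v)) <= K * N) by (rewrite <- HN2; apply HG).
  replace (F X Y) with (a * u + b * v + (F X Y - (a * u + b * v))) by ring.
  replace (G X Y) with (c * u + d * v + (G X Y - (c * u + d * v))) by ring.
  eapply Rle_trans; [exact (lyap_deriv_perturbed_le u v _ _ del Hu Hv Hh1 Hh2)|].
  pose proof (quad_form_le p r s u v ltac:(lra) ltac:(lra) ltac:(lra)) as HQN; fold N in HQN.
  assert (HkQ : m / (p + s) * quad_form p r s u v <= m * N).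
  { replace (m * N) with (m / (p + s) * ((p + s) * N)) by (field; lra).
    apply Rmult_le_compat_l; [apply Rlt_le, Rdiv_lt_0_compat|]; lra. }
  fold N; replace (2 * (a + d) * (a * d - b * c)) with (- 2 * m) by (unfold m; ring).
  nra.
Qed.

Lemma locally_stable_of_linearization : locally_stable F G e1 e2.
Proof.
  destruct (lyap_pos_def a b c d Hdet) as [Hp [Hs Hrs]].
  destruct lyap_decrease_near_equilibrium as [k [r0 [Hk [Hr0 Hdecr]]]].
  exact (locally_stable_of_quadratic_lyapunov F G e1 e2 _ _ _ k r0 Hp Hs Hrs Hk Hr0 Hdecr).
Qed.

End Linearization.

Lemma bhat_pos beta alpha zS :
  0 < beta -> 0 < alpha < 1 -> 0 <= zS <= 1 -> 0 < bhat beta alpha zS.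
Proof.
  unfold bhat; intros Hb Ha Hz.
  assert ((1 - alpha) * zS <= 1 - alpha) by nra.
  apply Rmult_lt_0_compat; lra.
Qed.

Lemma Rabs_scal_mul_add_le B B' u v : 0 <= B -> 0 <= B' ->
  Rabs (B * (u * (u + v))) <= 2 * (B + B') * (u ^ 2 + v ^ 2).
Proof.
  intros HB HB'; rewrite Rabs_mult, (Rabs_pos_eq B HB).
  assert (Rabs (u * (u + v)) <= 2 * (u ^ 2 + v ^ 2)) by (apply Rabs_le; split; nra).
  pose proof (Rabs_pos (u * (u + v))); nra.
Qed.

Definition dfH_dIH (bH gH qHL alpha zS eH eL : R) : R :=
  bhat bH alpha zS * (1 - 2 * eH - eL) - qHL - gH.
Definition dfH_dIL (bH qLH alpha zS eH : R) : R := - bhat bH alpha zS * eH + qLH.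
Definition dfL_dIH (bL qHL alpha zS eL : R) : R := - bhat bL alpha zS * eL + qHL.
Definition dfL_dIL (bL gL qLH alpha zS eH eL : R) : R :=
  bhat bL alpha zS * (1 - eH - 2 * eL) - qLH - gL.

Section BiVirus.

Variables bH bL gH gL qHL qLH alpha zS eH eL : R.

Let F := fH bH bL gH gL qHL qLH alpha zS.
Let G := fL bH bL gH gL qHL qLH alpha zS.
Let BH := bhat bH alpha zS.
Let BL := bhat bL alpha zS.
Let a := dfH_dIH bH gH qHL alpha zS eH eL.
Let b := dfH_dIL bH qLH alpha zS eH.
Let c := dfL_dIH bL qHL alpha zS eL.
Let d := dfL_dIL bL gL qLH alpha zS eH eL.

Lemma fH_expand X Y :
  F X Y = F eH eL + a * (X - eH) + b * (Y - eL) - BH * ((X - eH) * ((X - eH) + (Y - eL))).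
Proof. unfold F, fH, a, b, dfH_dIH, dfH_dIL, BH; ring. Qed.

Lemma fL_expand X Y :
  G X Y = G eH eL + c * (X - eH) + d * (Y - eL) - BL * ((Y - eL) * ((Y - eL) + (X - eH))).
Proof. unfold G, fL, c, d, dfL_dIH, dfL_dIL, BL; ring. Qed.

Hypotheses (HbH : 0 < bH) (HbL : 0 < bL) (Halpha : 0 < alpha < 1) (HzS : 0 <= zS <= 1).
Hypotheses (EH : F eH eL = 0) (EL : G eH eL = 0).

Lemma fH_remainder_le X Y :
  Rabs (F X Y - (a * (X - eH) + b * (Y - eL)))
    <= 2 * (BH + BL) * ((X - eH) ^ 2 + (Y - eL) ^ 2).
Proof.
  rewrite fH_expand, EH.
  replace (0 + a * (X - eH) + b * (Y - eL) - BH * ((X - eH) * ((X - eH) + (Y - eL)))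
           - (a * (X - eH) + b * (Y - eL)))
    with (- (BH * ((X - eH) * ((X - eH) + (Y - eL))))) by ring.
  rewrite Rabs_Ropp; apply Rabs_scal_mul_add_le; apply Rlt_le, bhat_pos; assumption.
Qed.

Lemma fL_remainder_le X Y :
  Rabs (G X Y - (c * (X - eH) + d * (Y - eL)))
    <= 2 * (BH + BL) * ((X - eH) ^ 2 + (Y - eL) ^ 2).
Proof.
  rewrite fL_expand, EL.
  replace (0 + c * (X - eH) + d * (Y - eL) - BL * ((Y - eL) * ((Y - eL) + (X - eH)))
           - (c * (X - eH) + d * (Y - eL)))
    with (- (BL * ((Y - eL) * ((Y - eL) + (X - eH))))) by ring.
  rewrite Rabs_Ropp, (Rplus_comm BH), (Rplus_comm ((X - eH) ^ 2)).
  apply Rabs_scal_mul_add_le; apply Rlt_le, bhat_pos; assumption.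
Qed.

Hypotheses (HeH : 0 < eH) (HeL : 0 < eL) (HqHL : 0 <= qHL) (HqLH : 0 <= qLH).

Lemma dfH_dIH_eq : a * eH = - qLH * eL - BH * (eH * eH).
Proof.
  assert (E : a * eH - (- qLH * eL - BH * (eH * eH)) = F eH eL)
    by (unfold F, fH, a, dfH_dIH, BH; ring).
  lra.
Qed.

Lemma dfL_dIL_eq : d * eL = - qHL * eH - BL * (eL * eL).
Proof.
  assert (E : d * eL - (- qHL * eH - BL * (eL * eL)) = G eH eL)
    by (unfold G, fL, d, dfL_dIL, BL; ring).
  lra.
Qed.

Lemma dfH_dIH_neg : a < 0.
Proof.
  assert (0 < BH) by (apply bhat_pos; assumption).
  assert (Hneg : a * eH < 0).
  { rewrite dfH_dIH_eq.
    assert (0 < BH * (eH * eH)) by (apply Rmult_lt_0_compat; nra).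
    assert (0 <= qLH * eL) by nra.
    lra. }
  destruct (Rlt_le_dec a 0) as [ok|Ha]; [exact ok|nra].
Qed.

Lemma dfL_dIL_neg : d < 0.
Proof.
  assert (0 < BL) by (apply bhat_pos; assumption).
  assert (Hneg : d * eL < 0).
  { rewrite dfL_dIL_eq.
    assert (0 < BL * (eL * eL)) by (apply Rmult_lt_0_compat; nra).
    assert (0 <= qHL * eH) by nra.
    lra. }
  destruct (Rlt_le_dec d 0) as [ok|Hd]; [exact ok|nra].
Qed.

Hypotheses (HgH : 0 < gH) (HgL : 0 < gL) (Hratio : bH / gH > bL / gL).

Lemma coexistence_needs_mutation : 0 < qHL \/ 0 < qLH.
Proof.
  destruct (Rle_lt_or_eq_dec 0 qHL HqHL) as [?|ZHL]; [now left|].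
  destruct (Rle_lt_or_eq_dec 0 qLH HqLH) as [?|ZLH]; [now right|exfalso].
  set (S := (alpha * zS + 1 - zS) * (1 - eH - eL)).
  assert (XH : bH * S = gH).
  { assert (E : eH * (bH * S - gH) = 0)
      by (rewrite <- EH; unfold F, fH, bhat, S; rewrite <- ZHL, <- ZLH; ring).
    apply Rmult_integral in E as [E|E]; lra. }
  assert (XL : bL * S = gL).
  { assert (E : eL * (bL * S - gL) = 0)
      by (rewrite <- EL; unfold G, fL, bhat, S; rewrite <- ZHL, <- ZLH; ring).
    apply Rmult_integral in E as [E|E]; lra. }
  assert (Hcross : bL * gH < bH * gL).
  { apply (Rmult_lt_reg_r (/ (gH * gL))); [apply Rinv_0_lt_compat; nra|].
    replace (bL * gH * / (gH * gL)) with (bL / gL) by (field; lra).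
    replace (bH * gL * / (gH * gL)) with (bH / gH) by (field; lra).
    exact Hratio. }
  rewrite <- XH, <- XL in Hcross; lra.
Qed.

Lemma jacobian_det_pos : 0 < a * d - b * c.
Proof.
  assert (HBH : 0 < BH) by (apply bhat_pos; assumption).
  assert (HBL : 0 < BL) by (apply bhat_pos; assumption).
  assert (Hdet : (a * d - b * c) * (eH * eL)
                 = (eH + eL) * (qLH * BL * (eL * eL) + qHL * BH * (eH * eH))).
  { replace ((a * d - b * c) * (eH * eL)) with ((a * eH) * (d * eL) - (b * eH) * (c * eL))
      by ring.
    rewrite dfH_dIH_eq, dfL_dIL_eq; unfold b, c, dfH_dIL, dfL_dIH, BH, BL; ring. }
  assert (Hmut : 0 < qLH * BL * (eL * eL) + qHL * BH * (eH * eH)).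
  { assert (0 <= qLH * BL * (eL * eL)) by (apply Rmult_le_pos; nra).
    assert (0 <= qHL * BH * (eH * eH)) by (apply Rmult_le_pos; nra).
    destruct coexistence_needs_mutation as [Hq|Hq].
    - assert (0 < qHL * BH * (eH * eH)) by (apply Rmult_lt_0_compat; nra); lra.
    - assert (0 < qLH * BL * (eL * eL)) by (apply Rmult_lt_0_compat; nra); lra. }
  assert (0 < (a * d - b * c) * (eH * eL)) by (rewrite Hdet; apply Rmult_lt_0_compat; lra).
  assert (0 < eH * eL) by nra.
  destruct (Rlt_le_dec 0 (a * d - b * c)) as [ok|Hle]; [exact ok|nra].
Qed.

End BiVirus.

Theorem lemma2 (bH bL gH gL qHL qLH alpha zS eH eL : R)
  (HbH : 0 < bH) (HbL : 0 < bL) (HgH : 0 < gH) (HgL : 0 < gL)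
  (Hratio : bH / gH > bL / gL) (Hb : bH > bL)
  (HqHL : 0 <= qHL) (HqLH : 0 <= qLH)
  (Halpha : 0 < alpha < 1) (HzS : 0 <= zS <= 1)
  (HeH : 0 < eH < 1) (HeL : 0 < eL < 1)
  (Heq : is_equilibrium (fH bH bL gH gL qHL qLH alpha zS)
                        (fL bH bL gH gL qHL qLH alpha zS) eH eL) :
  locally_stable (fH bH bL gH gL qHL qLH alpha zS)
                 (fL bH bL gH gL qHL qLH alpha zS) eH eL.
Proof.
  destruct Heq as [EH EL], HeH as [HeH _], HeL as [HeL _].
  apply (locally_stable_of_linearization _ _ eH eL
           (dfH_dIH bH gH qHL alpha zS eH eL) (dfH_dIL bH qLH alpha zS eH)
           (dfL_dIH bL qHL alpha zS eL) (dfL_dIL bL gL qLH alpha zS eH eL)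
           (2 * (bhat bH alpha zS + bhat bL alpha zS))).
  - pose proof (dfH_dIH_neg _ _ _ _ _ _ _ _ _ _ HbH Halpha HzS EH HeH HeL HqLH).
    pose proof (dfL_dIL_neg _ _ _ _ _ _ _ _ _ _ HbL Halpha HzS EL HeH HeL HqHL).
    lra.
  - eapply jacobian_det_pos; eassumption.
  - eapply fH_remainder_le; eassumption.
  - eapply fL_remainder_le; eassumption.
Qed.
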